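(* For all CQs $q,q'$ and collections of labeled examples $E=(E^+,E^-)$ (all of the same arity $k$): (1) $q'$ is a $\preceq^{\mathrm{cod}}$-generalization for $(q,E)$ if and only if $q'$ is a most-specific fitting CQ for $(E^+\cup\{e_q\},E^-)$; (2) $q$ is a most-specific fitting CQ for $E$ if and only if $q$ is a $\preceq^{\mathrm{cod}}$-generalization for $(q_\bot,E)$, where, for the relevant schema $\mathcal S=\{R_1,\dots,R_n\}$, $q_\bot$ is the $k$-ary CQ $q_\bot(x,\dots,x)\text{ :- }R_1(x,\dots,x),\dots,R_n(x,\dots,x)$.
   Context: A data example of arity $k$ is a pair $(I,\mathbf a)$ with $I$ a finite database instance and $\mathbf a$ a $k$-tuple of values of $I$. A $k$-ary CQ is $q(x_1,\dots,x_k)\text{ :- }\alpha_1,\dots,\alpha_n$ (relational atoms without constants; answer variables may repeat and each occurs in some atom). $[\![q]\!]$ denotes the set of data examples $(I,\mathbf a)$ with $\mathbf a\in q(I)$; $q_1\subseteq q_2$ is query containment, $\equiv$ equivalence. $E=(E^+,E^-)$ is a pair of sets of data examples; $q$ fits $E$ if $E^+\subseteq[\![q]\!]$ and $E^-\cap[\![q]\!]=\emptyset$. The canonical example $e_q$ of $q(x_1,\dots,x_k)$ is $(I_q,(x_1,\dots,x_k))$ where $I_q$ consists of the atoms of $q$ viewed as facts over the variables. Candidate queries are CQs over the relation symbols occurring in the input. $q_1\preceq^{\mathrm{cod}}_q q_2$ iff $[\![q]\!]\oplus[\![q_1]\!]\subseteq[\![q]\!]\oplus[\![q_2]\!]$ ($\oplus$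 = symmetric difference); $q_1\prec_q q_2$ iff $q_1\preceq_q q_2$ and not $q_2\preceq_q q_1$. A $\preceq^{\mathrm{cod}}$-generalization for $(q,E)$ is a CQ $q'$ that fits $E$ with $q\subseteq q'$ such that there is no CQ $q''$ fitting $E$ with $q\subseteq q''$ and $q''\prec^{\mathrm{cod}}_q q'$. A most-specific fitting CQ for $E$ is a CQ $q$ that fits $E$ such that $q\subseteq q'$ for every CQ $q'$ that fits $E$. *)

From HB Require Import structures.
From mathcomp Require Import all_boot.

Set Implicit Arguments.
Unset Strict Implicit.
Unset Printing Implicit Defensive.

(* A schema is a finite type of relation symbols [S] with arities [ar].
   Values (of instances) and variables (of queries) are both natural numbers. *)

Definition atom (S : finType) (ar : S -> nat) : Type :=
  {r : S & (ar r).-tuple nat}.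

Definition mk_atom (S : finType) (ar : S -> nat) (r : S) (t : (ar r).-tuple nat)
  : atom ar := @Tagged S r (fun r => (ar r).-tuple nat) t.

Definition instance (S : finType) (ar : S -> nat) : Type := seq (atom ar).

Definition vals_of (S : finType) (ar : S -> nat) (I : instance ar) : seq nat :=
  flatten [seq (tagged f : seq nat) | f : atom ar <- I].

Record dex (S : finType) (ar : S -> nat) (k : nat) : Type :=
  DEx { dinst : instance ar; dtup : k.-tuple nat }.

Definition wf_dex (S : finType) (ar : S -> nat) (k : nat) (e : dex ar k) : Prop :=
  {subset dtup e <= vals_of (dinst e)}.

Record cq (S : finType) (ar : S -> nat) (k : nat) : Type :=
  CQ { head : k.-tuple nat; body : seq (atom ar) }.

Definition is_cq (S : finType) (ar : S -> nat) (k : nat) (q : cq ar k) : Prop :=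
  {subset head q <= vals_of (body q)}.

Definition map_atom (S : finType) (ar : S -> nat) (h : nat -> nat) (f : atom ar)
  : atom ar := mk_atom (map_tuple h (tagged f)).

Definition answer (S : finType) (ar : S -> nat) (k : nat)
  (q : cq ar k) (I : instance ar) (a : k.-tuple nat) : Prop :=
  exists h : nat -> nat,
    (forall f, f \in body q -> map_atom h f \in I) /\ map_tuple h (head q) = a.

Definition denot (S : finType) (ar : S -> nat) (k : nat) (q : cq ar k)
  (e : dex ar k) : Prop :=
  wf_dex e /\ answer q (dinst e) (dtup e).

Definition contained (S : finType) (ar : S -> nat) (k : nat) (q1 q2 : cq ar k) : Prop :=
  forall (I : instance ar) (a : k.-tuple nat), answer q1 I a -> answer q2 I a.

Definition symdiff (T : Type) (A B : T -> Prop) : T -> Prop :=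
  fun x => (A x /\ ~ B x) \/ (B x /\ ~ A x).

Definition cod_le (S : finType) (ar : S -> nat) (k : nat) (q q1 q2 : cq ar k) : Prop :=
  forall e, symdiff (denot q) (denot q1) e -> symdiff (denot q) (denot q2) e.

Definition cod_lt (S : finType) (ar : S -> nat) (k : nat) (q q1 q2 : cq ar k) : Prop :=
  cod_le q q1 q2 /\ ~ cod_le q q2 q1.

Definition examples (S : finType) (ar : S -> nat) (k : nat) : Type :=
  ((dex ar k -> Prop) * (dex ar k -> Prop))%type.

Definition fits (S : finType) (ar : S -> nat) (k : nat) (q : cq ar k)
  (E : examples ar k) : Prop :=
  (forall e, E.1 e -> denot q e) /\ (forall e, E.2 e -> ~ denot q e).

Definition cod_gen (S : finType) (ar : S -> nat) (k : nat) (q : cq ar k)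
  (E : examples ar k) (q' : cq ar k) : Prop :=
  [/\ is_cq q', fits q' E, contained q q' &
      ~ (exists q'' : cq ar k,
           [/\ is_cq q'', fits q'' E, contained q q'' & cod_lt q q'' q'])].

Definition msf (S : finType) (ar : S -> nat) (k : nat) (E : examples ar k)
  (q : cq ar k) : Prop :=
  [/\ is_cq q, fits q E &
      forall q' : cq ar k, is_cq q' -> fits q' E -> contained q q'].

Definition canon (S : finType) (ar : S -> nat) (k : nat) (q : cq ar k) : dex ar k :=
  DEx (body q) (head q).

Definition qbot (S : finType) (ar : S -> nat) (k : nat) : cq ar k :=
  CQ (nseq_tuple k 0) [seq mk_atom (nseq_tuple (ar r) 0) | r <- enum S].

(** If [q1] and [q2] both contain [q], the symmetric difference of the
    answer sets of [q] and [qi] is just the answers of [qi] that are not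
    answers of [q]; testing the canonical example of [q1] then shows that
    [q1 <=^cod_q q2] is exactly [q1 \subseteq q2].  CQs are closed under
    conjunction (glue the two bodies along their answer tuples), and the
    conjunction of two CQs that fit [E] and contain [q] again fits [E] and
    contains [q].  Hence a [<=^cod_q]-minimal fitting CQ above [q] is the same
    as a containment-least fitting CQ above [q].  Fitting [e_q] positively
    means containing [q] (Chandra-Merlin), which gives (1); and [q_bot] is
    contained in every CQ over the schema, which gives (2). *)

From Stdlib Require Import Classical.
From Pilot Require Import Defs.
From mathcomp Require Import all_boot.

Set Implicit Arguments.
Unset Strict Implicit.
Unset Printing Implicit Defensive.

Section Homomorphisms.

Variables (S : finType) (ar : S -> nat).

Lemma map_atom_comp (g h : nat -> nat) (f : atom ar) :
  map_atom h (map_atom g f) = map_atom (h \o g) f.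
Proof. by case: f => r t; congr Tagged; apply: val_inj; rewrite /= map_comp. Qed.

Lemma map_atom_id (f : atom ar) : map_atom id f = f.
Proof. by case: f => r t; congr Tagged; apply: val_inj; rewrite /= map_id. Qed.

Lemma eq_map_atom (g h : nat -> nat) : g =1 h -> map_atom (ar := ar) g =1 map_atom h.
Proof. by move=> gh [r t]; congr Tagged; apply: val_inj; apply: eq_map. Qed.

Lemma vals_of_cat (I J : instance ar) : vals_of (I ++ J) = vals_of I ++ vals_of J.
Proof. by rewrite /vals_of map_cat flatten_cat. Qed.

Lemma mem_vals_of_map (g : nat -> nat) (I : instance ar) u :
  u \in vals_of I -> g u \in vals_of (map (map_atom g) I).
Proof.
move=> /flattenP [_ /mapP [f fI ->] uf]; apply/flattenP.
exists (map g (tagged f)); last exact: map_f.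
by apply/mapP; exists (map_atom g f); [exact: map_f | case: f {fI uf}].
Qed.

Variable k : nat.
Implicit Types q : cq ar k.

Lemma containedP q1 q2 : contained q1 q2 <-> answer q2 (body q1) (Defs.head q1).
Proof.
split=> [|[g [gB gH]] I a [h [hB hH]]].
  apply; exists id; split; first by move=> f f1; rewrite map_atom_id.
  by apply: val_inj; rewrite /= map_id.
exists (h \o g); split; first by move=> f f1; rewrite -map_atom_comp hB ?gB.
by rewrite -hH -gH; apply: val_inj; rewrite /= map_comp.
Qed.

Lemma denot_canon q : is_cq q -> denot q (canon q).
Proof. by split=> //; apply/containedP. Qed.

Lemma contained_denot q1 q2 e : contained q1 q2 -> denot q1 e -> denot q2 e.
Proof. by move=> q12 [wf_e ans]; split=> //; exact: q12. Qed.

End Homomorphisms.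

Section Conjunction.

Variables (S : finType) (ar : S -> nat) (k : nat) (q1 q2 : cq ar k).

Local Notation x := (Defs.head q1).
Local Notation y := (Defs.head q2).

(* Answer positions whose variables must be identified in the conjunction. *)
Definition head_link : rel 'I_k :=
  fun i j => (tnth x i == tnth x j) || (tnth y i == tnth y j).

Lemma head_link_sym : connect_sym head_link.
Proof.
by apply: sym_connect_sym => i j; rewrite /head_link eq_sym [tnth y i == _]eq_sym.
Qed.

(* Variables of the conjunction: [3 * root i] for the class of answer
   position [i], [3 * u + c] for a non-answer variable [u] of [q1] ([c = 1])
   or of [q2] ([c = 2]). *)
Definition rename_var (z : k.-tuple nat) (c u : nat) : nat :=
  if [pick i | tnth z i == u] is Some i then root head_link i * 3 else u * 3 + c.

Lemma rename_var_tnth z c i :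
  (forall j, tnth z j = tnth z i -> head_link j i) ->
  rename_var z c (tnth z i) = root head_link i * 3.
Proof.
rewrite /rename_var => z_link; case: pickP => [j /eqP/z_link ji|/(_ i)].
  by rewrite (rootP head_link_sym (connect1 ji)).
by rewrite eqxx.
Qed.

Lemma comp_rename_var z c (g f : nat -> nat) :
  (forall u, f (u * 3 + c) = g u) ->
  (forall i, f (root head_link i * 3) = g (tnth z i)) ->
  forall u, f (rename_var z c u) = g u.
Proof. by move=> fc froot u; rewrite /rename_var; case: pickP => [i /eqP <-|]. Qed.

Definition rename_l := rename_var x 1.
Definition rename_r := rename_var y 2.

Lemma rename_l_head i : rename_l (tnth x i) = root head_link i * 3.
Proof. by apply: rename_var_tnth => j ji; rewrite /head_link ji eqxx. Qed.

Lemma rename_r_head i : rename_r (tnth y i) = root head_link i * 3.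
Proof. by apply: rename_var_tnth => j ji; rewrite /head_link ji eqxx orbT. Qed.

Definition cq_conj : cq ar k :=
  CQ (map_tuple rename_l x)
     (map (map_atom rename_l) (body q1) ++ map (map_atom rename_r) (body q2)).

Lemma is_cq_conj : is_cq q1 -> is_cq cq_conj.
Proof.
move=> cq1 _ /mapP [u ux ->].
by rewrite vals_of_cat mem_cat mem_vals_of_map ?cq1.
Qed.

Lemma contained_conj_l : contained cq_conj q1.
Proof.
apply/containedP; exists rename_l; split=> // f f1.
by rewrite mem_cat map_f.
Qed.

Lemma contained_conj_r : contained cq_conj q2.
Proof.
apply/containedP; exists rename_r; split=> [f f2|].
  by rewrite mem_cat map_f ?orbT.
by apply: eq_from_tnth => i; rewrite !tnth_map rename_l_head rename_r_head.
Qed.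

Lemma answer_conj I a : answer q1 I a -> answer q2 I a -> answer cq_conj I a.
Proof.
move=> [h1 [h1B h1H]] [h2 [h2B h2H]].
have a_link i j : connect head_link i j -> tnth a i = tnth a j.
  have a_closed : closed head_link [pred j | tnth a j == tnth a i].
    move=> l m /orP [] /eqP lm /=.
      by rewrite !inE -h1H !tnth_map lm.
    by rewrite !inE -h2H !tnth_map lm.
  by move/(closed_connect a_closed); rewrite inE eqxx => /esym/eqP.
pose h v := if v %% 3 == 0 then nth 0 a (v %/ 3)
            else if v %% 3 == 1 then h1 (v %/ 3) else h2 (v %/ 3).
have h_root i : h (root head_link i * 3) = tnth a i.
  by rewrite /h modnMl mulnK // -tnth_nth -(a_link _ _ (connect_root _ i)).
have h_l : forall u, h (rename_l u) = h1 u.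
  apply: comp_rename_var => [u|i]; last by rewrite h_root -h1H tnth_map.
  by rewrite /h modnMDl divnMDl //= addn0.
have h_r : forall u, h (rename_r u) = h2 u.
  apply: comp_rename_var => [u|i]; last by rewrite h_root -h2H tnth_map.
  by rewrite /h modnMDl divnMDl //= addn0.
exists h; split.
  move=> f; rewrite mem_cat => /orP [] /mapP [g gB ->]; rewrite map_atom_comp.
    by rewrite (eq_map_atom h_l) h1B.
  by rewrite (eq_map_atom h_r) h2B.
by rewrite -h1H; apply: val_inj; rewrite /= -map_comp; apply: eq_map.
Qed.

End Conjunction.

Section CodGeneralizations.

Variables (S : finType) (ar : S -> nat) (k : nat).
Implicit Types (q : cq ar k) (E : examples ar k).

Lemma denot_conj q1 q2 e : denot q1 e -> denot q2 e -> denot (cq_conj q1 q2) e.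
Proof. by move=> [wf_e ans1] [_ ans2]; split=> //; exact: answer_conj. Qed.

Lemma fits_conj q1 q2 E : fits q1 E -> fits q2 E -> fits (cq_conj q1 q2) E.
Proof.
move=> [pos1 neg1] [pos2 _]; split=> e Ee.
  exact: denot_conj (pos1 e Ee) (pos2 e Ee).
by move/(contained_denot (contained_conj_l (q1 := q1) (q2 := q2))); exact: neg1.
Qed.

Lemma contained_conj q q1 q2 :
  contained q q1 -> contained q q2 -> contained q (cq_conj q1 q2).
Proof. by move=> /containedP q_q1 /containedP q_q2; apply/containedP/answer_conj. Qed.

Lemma cod_le_contained q q1 q2 :
  is_cq q1 -> contained q q1 -> contained q q2 ->
  cod_le q q1 q2 <-> contained q1 q2.
Proof.
move=> cq1 q_q1 q_q2; split=> [le12|q12 e [[qe n1e]|[q1e nqe]]].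
- apply/containedP; have [qe|nqe] := classic (denot q (canon q1)).
    by have [] := contained_denot q_q2 qe.
  have [[] //|[[] //]] : symdiff (denot q) (denot q2) (canon q1).
  by apply: le12; right; split=> //; exact: denot_canon.
- by case: n1e; exact: contained_denot q_q1 qe.
- by right; split=> //; exact: contained_denot q12 q1e.
Qed.

Lemma cod_lt_contained q q1 q2 :
  is_cq q1 -> is_cq q2 -> contained q q1 -> contained q q2 ->
  cod_lt q q1 q2 <-> contained q1 q2 /\ ~ contained q2 q1.
Proof.
by move=> cq1 cq2 q_q1 q_q2; rewrite /cod_lt !cod_le_contained.
Qed.

(* If [q'] is [<=^cod_q]-minimal and [q''] is another fitting CQ above [q],
   then the conjunction of [q'] and [q''] cannot lie strictly below [q']. *)
Lemma cod_genP q E q' :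
  cod_gen q E q' <->
  [/\ is_cq q', fits q' E, contained q q' &
      forall q'', is_cq q'' -> fits q'' E -> contained q q'' -> contained q' q''].
Proof.
split=> [[cq' fit' q_q' no_lt]|[cq' fit' q_q' least]]; split=> //.
  move=> q'' cq'' fit'' q_q''; pose q3 := cq_conj q' q''.
  suff q'_q3 : contained q' q3 by move=> I a /q'_q3; exact: contained_conj_r.
  have cq3 : is_cq q3 by exact: is_cq_conj.
  have q_q3 : contained q q3 by exact: contained_conj.
  apply: NNPP => not_q'_q3; apply: no_lt; exists q3; split=> //.
  - exact: fits_conj.
  - by apply/cod_lt_contained => //; split=> //; exact: contained_conj_l.
by case=> q'' [cq'' fit'' q_q'' /cod_lt_contained [] // _ []]; exact: least.
Qed.

End CodGeneralizations.

Section CanonicalExample.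

Variables (S : finType) (ar : S -> nat) (k : nat) (Epos Eneg : dex ar k -> Prop).
Implicit Types q : cq ar k.

Lemma fits_canonP q q' : is_cq q ->
  fits q' ((fun e => Epos e \/ e = canon q), Eneg) <->
  fits q' (Epos, Eneg) /\ contained q q'.
Proof.
move=> cq; split=> [[/= pos neg]|[[/= pos neg] q_q']].
  split; first by split=> // e Ee; apply: pos; left.
  by apply/containedP; have [] := pos _ (or_intror erefl).
by split=> //= e [/pos //|->]; split=> //; apply/containedP.
Qed.

Lemma msf_canonP q q' : is_cq q ->
  msf ((fun e => Epos e \/ e = canon q), Eneg) q' <->
  [/\ is_cq q', fits q' (Epos, Eneg), contained q q' &
      forall q'', is_cq q'' -> fits q'' (Epos, Eneg) -> contained q q'' ->
        contained q' q''].
Proof.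
move=> cq; split=> [[cq' /(fits_canonP _ cq) [fit' q_q'] least]|[cq' fit' q_q' least]].
  by split=> // q'' cq'' fit'' q_q''; apply: least => //; exact/fits_canonP.
by split=> // [|q'' cq'' /(fits_canonP _ cq) []]; [exact/fits_canonP | exact: least].
Qed.

End CanonicalExample.

Lemma qbot_contained (S : finType) (ar : S -> nat) (k : nat) (q : cq ar k) :
  contained (qbot ar k) q.
Proof.
have const0 n (t : n.-tuple nat) : map_tuple (fun=> 0) t = nseq_tuple n 0.
  by apply: eq_from_tnth => i; rewrite tnth_map tnth_nseq.
apply/containedP; exists (fun=> 0); split=> [[r t] _|]; last exact: const0.
by apply/mapP; exists r; rewrite ?mem_enum //; congr Tagged; exact: const0.
Qed.

Theorem theorem8 (S : finType) (ar : S -> nat) (k : nat)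
  (Epos Eneg : dex ar k -> Prop)
  (Hwf : forall e, Epos e \/ Eneg e -> wf_dex e) :
  (forall q q' : cq ar k, is_cq q -> is_cq q' ->
     (cod_gen q (Epos, Eneg) q' <->
      msf ((fun e => Epos e \/ e = canon q), Eneg) q')) /\
  (forall q : cq ar k, is_cq q ->
     (msf (Epos, Eneg) q <-> cod_gen (qbot ar k) (Epos, Eneg) q)).
Proof.
split=> [q q' cq _|q cq].
  by rewrite cod_genP msf_canonP.
rewrite cod_genP; split=> [[_ fit least]|[_ fit _ least]].
  by split=> // [|q'' cq'' fit'' _]; [exact: qbot_contained | exact: least].
by split=> // q'' cq'' fit''; apply: least => //; exact: qbot_contained.
Qed.
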